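(* Let $h\ge 1$, let $0<t_1<t_2<\dots<t_h$ be fixed points, let $W$ be a positive nondecreasing function with $W(t_1)\le \dots\le W(t_h)$ (all $W(t_j)>0$), and let $\xi_1,\dots,\xi_h,\zeta_1,\dots,\zeta_h$ be nonnegative integers with $\xi_j+\zeta_j\ge 1$ for every $j$. Consider the problem $$\text{maximize } \mathcal L(\mathbf p)=\prod_{j=1}^h p_j^{\xi_j}\Big(\sum_{k\ge j}\frac{p_k}{W(t_k)}\Big)^{\zeta_j}\quad\text{subject to } \sum_{j=1}^h p_j=1,\ p_j\ge 0\ (j=1,\dots,h).$$ Then this problem has a unique maximizer $\mathbf p=(p_1,\dots,p_h)$.
   Context: Here $p_j$ is the mass a discrete distribution assigns to $t_j$; $\xi_j$ and $\zeta_j$ are the numbers of uncensored and censored observations located at $t_j$, respectively. The convention $0^0=1$ is used. *)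

(* classical reals. Indices are 0-based: j = 0, ..., h-1
   corresponds to the paper's j = 1, ..., h. *)
From Stdlib Require Import Reals Lra Lia.
Open Scope R_scope.

Fixpoint rsum (f : nat -> R) (n : nat) : R :=
  match n with
  | O => 0
  | S m => rsum f m + f m
  end.

Fixpoint rprod (f : nat -> R) (n : nat) : R :=
  match n with
  | O => 1
  | S m => rprod f m * f m
  end.

Definition feasible (h : nat) (p : nat -> R) : Prop :=
  (forall j, (j < h)%nat -> 0 <= p j) /\ rsum p h = 1.

Definition tailsum (h : nat) (t : nat -> R) (W : R -> R) (p : nat -> R) (j : nat) : R :=
  rsum (fun k => if (j <=? k)%nat then p k / W (t k) else 0) h.

(* likelihood  prod_j p_j^xi_j * (tailsum_j)^zeta_j ; pow has 0^0 = 1 *)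
Definition lik (h : nat) (t : nat -> R) (W : R -> R) (xi zeta : nat -> nat)
  (p : nat -> R) : R :=
  rprod (fun j => (p j) ^ (xi j) * (tailsum h t W p j) ^ (zeta j)) h.

From Stdlib Require Import Reals Lra Lia Classical ClassicalEpsilon.
Open Scope R_scope.

(* over the probability simplex.  Only W(t_j) > 0 and xi_j + zeta_j >= 1 are
   needed.

   Existence: L is continuous (coordinatewise sequential limits) and bounded on
   the simplex, and the simplex is sequentially compact (Bolzano-Weierstrass in
   each coordinate plus a finite diagonal extraction), so the supremum of L is
   attained.  It is positive, since L is positive at the uniform distribution.

   Uniqueness: if p and q both attain the maximum M > 0, their midpoint m is
   feasible and, every factor being a product of powers of linear forms,
   AM-GM gives f_j(p) f_j(q) <= f_j(m)^2.  Multiplying, M^2 <= L(m)^2 <= M^2,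
   so every factor inequality is an equality: p_j = q_j when xi_j > 0 and
   T_j(p) = T_j(q) when zeta_j > 0.  Since T_j = p_j / W(t_j) + T_(j+1), a
   backward induction on j then yields p = q. *)

(** Finite sums and products *)

Lemma rsum_ext f g n : (forall k, (k < n)%nat -> f k = g k) -> rsum f n = rsum g n.
Proof.
  induction n as [|n IH]; intros Hfg; simpl; [reflexivity|].
  rewrite IH, Hfg; [reflexivity | lia | intros; apply Hfg; lia].
Qed.

Lemma rsum_const c n : rsum (fun _ => c) n = INR n * c.
Proof. induction n as [|n IH]; cbn [rsum]; [simpl; ring|]. rewrite IH, S_INR; ring. Qed.

Lemma rsum_le f g n : (forall k, (k < n)%nat -> f k <= g k) -> rsum f n <= rsum g n.
Proof.
  induction n as [|n IH]; intros Hfg; simpl; [lra|].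
  assert (rsum f n <= rsum g n) by (apply IH; intros; apply Hfg; lia).
  assert (f n <= g n) by (apply Hfg; lia). lra.
Qed.

Lemma rsum_nonneg f n : (forall k, (k < n)%nat -> 0 <= f k) -> 0 <= rsum f n.
Proof.
  intros Hf. replace 0 with (rsum (fun _ => 0) n) by (rewrite rsum_const; ring).
  apply rsum_le; exact Hf.
Qed.

Lemma rsum_ge_term f n j :
  (forall k, (k < n)%nat -> 0 <= f k) -> (j < n)%nat -> f j <= rsum f n.
Proof.
  induction n as [|n IH]; intros Hf Hj; simpl; [lia|].
  assert (0 <= f n) by (apply Hf; lia).
  destruct (Nat.eq_dec j n) as [->|Hne].
  - assert (0 <= rsum f n) by (apply rsum_nonneg; intros; apply Hf; lia). lra.
  - assert (f j <= rsum f n) by (apply IH; [intros; apply Hf; lia | lia]). lra.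
Qed.

Lemma rsum_midpoint f g n :
  rsum (fun k => (f k + g k) / 2) n = (rsum f n + rsum g n) / 2.
Proof. induction n as [|n IH]; simpl; [field|]. rewrite IH; field. Qed.

Lemma rprod_mul f g n : rprod (fun j => f j * g j) n = rprod f n * rprod g n.
Proof. induction n as [|n IH]; simpl; [ring|]. rewrite IH; ring. Qed.

Lemma rprod_nonneg f n : (forall k, (k < n)%nat -> 0 <= f k) -> 0 <= rprod f n.
Proof.
  induction n as [|n IH]; intros Hf; simpl; [lra|].
  apply Rmult_le_pos; [apply IH; intros; apply Hf | apply Hf]; lia.
Qed.

Lemma rprod_pos f n : (forall k, (k < n)%nat -> 0 < f k) -> 0 < rprod f n.
Proof.
  induction n as [|n IH]; intros Hf; simpl; [lra|].
  apply Rmult_lt_0_compat; [apply IH; intros; apply Hf | apply Hf]; lia.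
Qed.

Lemma rprod_le f g n :
  (forall k, (k < n)%nat -> 0 <= f k <= g k) -> rprod f n <= rprod g n.
Proof.
  induction n as [|n IH]; intros Hfg; simpl; [lra|].
  assert (0 <= rprod f n) by (apply rprod_nonneg; intros; apply Hfg; lia).
  assert (rprod f n <= rprod g n) by (apply IH; intros; apply Hfg; lia).
  assert (0 <= f n <= g n) by (apply Hfg; lia). nra.
Qed.

Lemma rprod_pos_factor f n :
  (forall k, (k < n)%nat -> 0 <= f k) -> 0 < rprod f n ->
  forall j, (j < n)%nat -> 0 < f j.
Proof.
  induction n as [|n IH]; intros Hf Hprod j Hj; simpl in Hprod; [lia|].
  assert (0 <= rprod f n) by (apply rprod_nonneg; intros; apply Hf; lia).
  assert (0 <= f n) by (apply Hf; lia).
  assert (0 < rprod f n /\ 0 < f n) as [Hrest Hlast]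
    by (split; apply Rnot_le_lt; intros ?; nra).
  destruct (Nat.eq_dec j n) as [->|Hne]; [exact Hlast|].
  apply IH; [intros; apply Hf; lia | exact Hrest | lia].
Qed.

Lemma rprod_eq_factor a b n :
  (forall k, (k < n)%nat -> 0 < b k <= a k) ->
  rprod a n <= rprod b n -> forall j, (j < n)%nat -> a j = b j.
Proof.
  induction n as [|n IH]; intros Hab Hle j Hj; simpl in Hle; [lia|].
  assert (0 < rprod b n) by (apply rprod_pos; intros; apply Hab; lia).
  assert (rprod b n <= rprod a n)
    by (apply rprod_le; intros k Hk; specialize (Hab k ltac:(lia)); lra).
  assert (0 < b n <= a n) by (apply Hab; lia).
  assert (Hrest : rprod a n = rprod b n).
  { apply Rle_antisym; [|assumption].
    apply Rnot_lt_le; intros Hlt.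
    assert (rprod b n * b n < rprod a n * a n); [|lra].
    apply Rlt_le_trans with (rprod a n * b n); [apply Rmult_lt_compat_r|apply Rmult_le_compat_l]; lra. }
  destruct (Nat.eq_dec j n) as [->|Hne]; [|apply IH; [intros; apply Hab; lia | lra | lia]].
  rewrite Hrest in Hle. apply Rle_antisym; [|lra].
  apply (Rmult_le_reg_l (rprod b n)); assumption.
Qed.

(** Tail sums *)

Definition midpoint (p q : nat -> R) : nat -> R := fun k => (p k + q k) / 2.

Lemma rsum_from_step f n j :
  rsum (fun k => if (j <=? k)%nat then f k else 0) n =
  (if (j <? n)%nat then f j else 0) + rsum (fun k => if (S j <=? k)%nat then f k else 0) n.
Proof.
  induction n as [|n IH]; cbn [rsum]; [destruct j; simpl; ring|]. rewrite IH.
  destruct (Nat.ltb_spec j n), (Nat.ltb_spec j (S n)),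
    (Nat.leb_spec j n), (Nat.leb_spec (S j) n); try (exfalso; lia); try ring.
  replace j with n by lia. ring.
Qed.

Section TailSums.
Variables (h : nat) (t : nat -> R) (W : R -> R).
Hypothesis hWpos : forall j, (j < h)%nat -> 0 < W (t j).

Lemma tailsum_step p j :
  (j < h)%nat -> tailsum h t W p j = p j / W (t j) + tailsum h t W p (S j).
Proof.
  intros Hj. unfold tailsum. rewrite rsum_from_step.
  destruct (Nat.ltb_spec j h); [reflexivity | lia].
Qed.

Lemma tailsum_end p : tailsum h t W p h = 0.
Proof.
  unfold tailsum. rewrite (rsum_ext _ (fun _ => 0)); [rewrite rsum_const; ring|].
  intros k Hk. destruct (Nat.leb_spec h k); [lia | reflexivity].
Qed.

Lemma tailsum_nonneg p j :
  (forall k, (k < h)%nat -> 0 <= p k) -> 0 <= tailsum h t W p j.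
Proof.
  intros Hp. apply rsum_nonneg. intros k Hk.
  destruct (j <=? k)%nat; [|lra].
  apply Rmult_le_pos; [apply Hp; lia | apply Rlt_le, Rinv_0_lt_compat, hWpos; lia].
Qed.

Lemma tailsum_ge_head p j :
  (forall k, (k < h)%nat -> 0 <= p k) -> (j < h)%nat ->
  p j / W (t j) <= tailsum h t W p j.
Proof.
  intros Hp Hj. rewrite tailsum_step by exact Hj.
  pose proof (tailsum_nonneg p (S j) Hp). lra.
Qed.

Lemma tailsum_midpoint p q j :
  tailsum h t W (midpoint p q) j =
  (tailsum h t W p j + tailsum h t W q j) / 2.
Proof.
  unfold tailsum, midpoint. rewrite <- rsum_midpoint. apply rsum_ext. intros k _.
  destruct (j <=? k)%nat; unfold Rdiv; ring.
Qed.

Lemma tail_determined p q :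
  (forall j, (j < h)%nat -> p j = q j \/ tailsum h t W p j = tailsum h t W q j) ->
  forall j, (j < h)%nat -> p j = q j.
Proof.
  intros Hinfo.
  assert (Hback : forall d j, (h - d <= j <= h)%nat ->
            tailsum h t W p j = tailsum h t W q j /\
            forall k, (j <= k < h)%nat -> p k = q k).
  { induction d as [|d IH]; intros j Hj.
    - replace j with h by lia. rewrite !tailsum_end. split; [reflexivity | lia].
    - destruct (Nat.eq_dec j h) as [->|Hne]; [apply IH; lia|].
      destruct (IH (S j)) as [Htail Hcoord]; [lia|].
      assert (Hj' : (j < h)%nat) by lia.
      assert (Hpj : p j = q j).
      { destruct (Hinfo j Hj') as [Heq|Heq]; [exact Heq|].
        rewrite (tailsum_step p j Hj'), (tailsum_step q j Hj'), Htail in Heq.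
        assert (0 < W (t j)) by (apply hWpos; exact Hj').
        apply (Rmult_eq_reg_r (/ W (t j))); [|apply Rinv_neq_0_compat; lra].
        unfold Rdiv in Heq; lra. }
      split.
      + rewrite (tailsum_step p j Hj'), (tailsum_step q j Hj'), Htail, Hpj. reflexivity.
      + intros k Hk. destruct (Nat.eq_dec k j) as [->|]; [exact Hpj|].
        apply Hcoord; lia. }
  intros j Hj. apply (proj2 (Hback h j ltac:(lia))). lia.
Qed.

End TailSums.

(** Midpoint inequality for products of powers (AM-GM) *)

Lemma pow_lt_compat x y n : 0 <= x < y -> (0 < n)%nat -> x ^ n < y ^ n.
Proof.
  intros Hxy Hn. induction n as [|n IH]; [lia|]. simpl.
  destruct (Nat.eq_dec n 0) as [->|Hn0]; [simpl; lra|].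
  assert (x ^ n < y ^ n) by (apply IH; lia).
  assert (0 <= x ^ n) by (apply pow_le; lra). nra.
Qed.

Lemma pow_inj_nonneg x y n : 0 <= x -> 0 <= y -> (0 < n)%nat -> x ^ n = y ^ n -> x = y.
Proof.
  intros Hx Hy Hn Heq.
  destruct (Rtotal_order x y) as [Hlt|[Heq'|Hlt]]; [|exact Heq'|].
  - pose proof (pow_lt_compat x y n (conj Hx Hlt) Hn). lra.
  - pose proof (pow_lt_compat y x n (conj Hy Hlt) Hn). lra.
Qed.

Lemma mul_le_midpoint_sq a b : a * b <= ((a + b) / 2) ^ 2.
Proof. assert (0 <= (a - b) * (a - b)) by apply Rle_0_sqr. nra. Qed.

Lemma mul_eq_midpoint_sq a b : a * b = ((a + b) / 2) ^ 2 -> a = b.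
Proof. intros Heq. assert ((a - b) * (a - b) = 0) by nra. nra. Qed.

Lemma mul_le_eq_both u1 v1 u2 v2 :
  0 <= u1 <= v1 -> 0 <= u2 <= v2 -> 0 < u1 * u2 -> v1 * v2 <= u1 * u2 ->
  u1 = v1 /\ u2 = v2.
Proof.
  intros H1 H2 Hpos Hle.
  assert (0 < u1 /\ 0 < u2) as [Hu1 Hu2] by (split; apply Rnot_le_lt; intros ?; nra).
  split; nra.
Qed.

Lemma factor_product_eq a b c d x z :
  (a ^ x * c ^ z) * (b ^ x * d ^ z) = (a * b) ^ x * (c * d) ^ z.
Proof. rewrite !Rpow_mult_distr; ring. Qed.

Lemma factor_square_eq a c x z :
  (a ^ x * c ^ z) * (a ^ x * c ^ z) = (a ^ 2) ^ x * (c ^ 2) ^ z.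
Proof. rewrite <- !pow_mult, !(Nat.mul_comm 2), !pow_mult. ring. Qed.

Lemma factor_midpoint_le a b c d x z :
  0 <= a -> 0 <= b -> 0 <= c -> 0 <= d ->
  (a ^ x * c ^ z) * (b ^ x * d ^ z) <=
  (((a + b) / 2) ^ x * ((c + d) / 2) ^ z) * (((a + b) / 2) ^ x * ((c + d) / 2) ^ z).
Proof.
  intros Ha Hb Hc Hd. rewrite factor_product_eq, factor_square_eq.
  apply Rmult_le_compat; try (apply pow_le; nra);
    apply pow_incr; split; try nra; apply mul_le_midpoint_sq.
Qed.

Lemma factor_midpoint_eq a b c d x z :
  0 <= a -> 0 <= b -> 0 <= c -> 0 <= d ->
  0 < (a ^ x * c ^ z) * (b ^ x * d ^ z) ->
  (((a + b) / 2) ^ x * ((c + d) / 2) ^ z) * (((a + b) / 2) ^ x * ((c + d) / 2) ^ z) <=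
  (a ^ x * c ^ z) * (b ^ x * d ^ z) ->
  ((0 < x)%nat -> a = b) /\ ((0 < z)%nat -> c = d).
Proof.
  intros Ha Hb Hc Hd Hpos Hle.
  rewrite factor_square_eq, factor_product_eq in Hle. rewrite factor_product_eq in Hpos.
  destruct (mul_le_eq_both ((a * b) ^ x) ((((a + b) / 2) ^ 2) ^ x)
              ((c * d) ^ z) ((((c + d) / 2) ^ 2) ^ z)) as [Hx Hz];
    try assumption;
    try (split; [apply pow_le; nra | apply pow_incr; split; [nra | apply mul_le_midpoint_sq]]).
  split; intros Hn; apply mul_eq_midpoint_sq;
    [apply (pow_inj_nonneg _ _ x) | apply (pow_inj_nonneg _ _ z)];
    try nra; try assumption.
Qed.

(** Uniqueness of the maximizer *)

Lemma feasible_coord_le1 h p j : feasible h p -> (j < h)%nat -> 0 <= p j <= 1.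
Proof.
  intros [Hp0 Hp1] Hj. split; [apply Hp0, Hj|].
  rewrite <- Hp1. apply rsum_ge_term; assumption.
Qed.

Lemma feasible_midpoint h p q :
  feasible h p -> feasible h q -> feasible h (midpoint p q).
Proof.
  intros [Hp0 Hp1] [Hq0 Hq1]. unfold midpoint. split.
  - intros j Hj. pose proof (Hp0 j Hj). pose proof (Hq0 j Hj). lra.
  - rewrite rsum_midpoint, Hp1, Hq1. field.
Qed.

Section Uniqueness.
Variables (h : nat) (t : nat -> R) (W : R -> R) (xi zeta : nat -> nat).
Hypothesis hWpos : forall j, (j < h)%nat -> 0 < W (t j).
Hypothesis hobs : forall j, (j < h)%nat -> (1 <= xi j + zeta j)%nat.

Definition lik_factor (p : nat -> R) (j : nat) : R :=
  p j ^ xi j * tailsum h t W p j ^ zeta j.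

Lemma lik_factor_nonneg p j :
  (forall k, (k < h)%nat -> 0 <= p k) -> (j < h)%nat -> 0 <= lik_factor p j.
Proof.
  intros Hp Hj. unfold lik_factor.
  apply Rmult_le_pos; apply pow_le; [apply Hp, Hj | apply tailsum_nonneg; assumption].
Qed.

Lemma lik_factor_pos r j :
  feasible h r -> 0 < lik h t W xi zeta r -> (j < h)%nat -> 0 < lik_factor r j.
Proof.
  intros Hr Hlik. apply rprod_pos_factor; [|exact Hlik].
  intros k Hk. apply lik_factor_nonneg; [apply Hr | exact Hk].
Qed.

Lemma lik_factor_midpoint_le p q j :
  feasible h p -> feasible h q -> (j < h)%nat ->
  lik_factor p j * lik_factor q j <= lik_factor (midpoint p q) j * lik_factor (midpoint p q) j.
Proof.
  intros Hp Hq Hj. unfold lik_factor. rewrite tailsum_midpoint.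
  apply factor_midpoint_le; [apply Hp, Hj | apply Hq, Hj | |];
    apply tailsum_nonneg; (exact hWpos || apply Hp || apply Hq).
Qed.

(* Equality case: since xi_j + zeta_j >= 1, either the coordinates or the
   tail sums at j agree. *)
Lemma lik_factor_midpoint_eq p q j :
  feasible h p -> feasible h q -> (j < h)%nat ->
  0 < lik_factor p j * lik_factor q j ->
  lik_factor (midpoint p q) j * lik_factor (midpoint p q) j = lik_factor p j * lik_factor q j ->
  p j = q j \/ tailsum h t W p j = tailsum h t W q j.
Proof.
  intros Hp Hq Hj Hprod Heq. unfold lik_factor in Hprod, Heq.
  rewrite tailsum_midpoint in Heq. unfold midpoint in Heq.
  pose proof (tailsum_nonneg h t W hWpos p j (proj1 Hp)).
  pose proof (tailsum_nonneg h t W hWpos q j (proj1 Hq)).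
  destruct (factor_midpoint_eq (p j) (q j) (tailsum h t W p j) (tailsum h t W q j)
              (xi j) (zeta j)) as [Hx Hz];
    [apply Hp, Hj | apply Hq, Hj | assumption | assumption | exact Hprod | lra |].
  pose proof (hobs j Hj).
  destruct (Nat.lt_ge_cases 0 (xi j)) as [Hxi|Hxi];
    [left; apply Hx, Hxi | right; apply Hz; lia].
Qed.

(* Two maximizers with positive maximal value coincide: the factor inequalities
   at their midpoint multiply to M^2 <= L(m)^2 <= M^2, so all are equalities. *)
Lemma lik_maximizers_agree p q :
  feasible h p -> feasible h q ->
  (forall r, feasible h r -> lik h t W xi zeta r <= lik h t W xi zeta p) ->
  (forall r, feasible h r -> lik h t W xi zeta r <= lik h t W xi zeta q) ->
  0 < lik h t W xi zeta p ->
  forall j, (j < h)%nat -> q j = p j.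
Proof.
  intros Hp Hq Hpmax Hqmax HM.
  set (m := midpoint p q).
  assert (Hm : feasible h m) by (apply feasible_midpoint; assumption).
  assert (Hpq : lik h t W xi zeta q = lik h t W xi zeta p)
    by (apply Rle_antisym; [apply Hpmax | apply Hqmax]; assumption).
  assert (Hprod : forall j, (j < h)%nat -> 0 < lik_factor p j * lik_factor q j)
    by (intros j Hj; apply Rmult_lt_0_compat; apply lik_factor_pos; (assumption || lra)).
  assert (Heq : forall j, (j < h)%nat ->
            lik_factor m j * lik_factor m j = lik_factor p j * lik_factor q j).
  { apply rprod_eq_factor.
    { intros j Hj. split; [apply Hprod, Hj | apply lik_factor_midpoint_le; assumption]. }
    rewrite !rprod_mul.
    change (lik h t W xi zeta m * lik h t W xi zeta m <=
            lik h t W xi zeta p * lik h t W xi zeta q).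
    rewrite Hpq. assert (lik h t W xi zeta m <= lik h t W xi zeta p) by (apply Hpmax, Hm).
    assert (0 <= lik h t W xi zeta m)
      by (apply rprod_nonneg; intros; apply lik_factor_nonneg; [apply Hm | assumption]).
    nra. }
  intros j Hj. symmetry. revert j Hj.
  apply (tail_determined h t W hWpos). intros j Hj.
  apply lik_factor_midpoint_eq; [exact Hp | exact Hq | exact Hj | apply Hprod, Hj | apply Heq, Hj].
Qed.

End Uniqueness.

(** Continuity of the likelihood along coordinatewise convergent sequences *)

Lemma cv_const c : Un_cv (fun _ => c) c.
Proof.
  intros eps Heps. exists 0%nat. intros n _. unfold R_dist.
  replace (c - c) with 0 by ring. rewrite Rabs_R0. exact Heps.
Qed.

Lemma rsum_cv (F : nat -> nat -> R) G m :
  (forall k, (k < m)%nat -> Un_cv (fun n => F n k) (G k)) ->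
  Un_cv (fun n => rsum (F n) m) (rsum G m).
Proof.
  induction m as [|m IH]; intros HF; simpl; [apply cv_const|].
  apply (CV_plus (fun n => rsum (F n) m) (fun n => F n m));
    [apply IH; intros; apply HF | apply HF]; lia.
Qed.

Lemma rprod_cv (F : nat -> nat -> R) G m :
  (forall k, (k < m)%nat -> Un_cv (fun n => F n k) (G k)) ->
  Un_cv (fun n => rprod (F n) m) (rprod G m).
Proof.
  induction m as [|m IH]; intros HF; simpl; [apply cv_const|].
  apply (CV_mult (fun n => rprod (F n) m) (fun n => F n m));
    [apply IH; intros; apply HF | apply HF]; lia.
Qed.

Lemma pow_cv u l e : Un_cv u l -> Un_cv (fun n => u n ^ e) (l ^ e).
Proof.
  intros Hu. induction e as [|e IH]; simpl; [apply cv_const|].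
  apply (CV_mult u (fun n => u n ^ e)); assumption.
Qed.

Lemma lik_cv h t W xi zeta (Q : nat -> nat -> R) p :
  (forall j, (j < h)%nat -> Un_cv (fun n => Q n j) (p j)) ->
  Un_cv (fun n => lik h t W xi zeta (Q n)) (lik h t W xi zeta p).
Proof.
  intros HQ.
  assert (Htail : forall j, Un_cv (fun n => tailsum h t W (Q n) j) (tailsum h t W p j)).
  { intros j. apply (rsum_cv (fun n k => if (j <=? k)%nat then Q n k / W (t k) else 0)).
    intros k Hk. destruct (j <=? k)%nat; [|apply cv_const].
    apply (CV_mult (fun n => Q n k) (fun _ => / W (t k))); [apply HQ, Hk | apply cv_const]. }
  apply (rprod_cv (fun n j => Q n j ^ xi j * tailsum h t W (Q n) j ^ zeta j)).
  intros j Hj.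
  apply (CV_mult (fun n => Q n j ^ xi j) (fun n => tailsum h t W (Q n) j ^ zeta j));
    apply pow_cv; [apply HQ, Hj | apply Htail].
Qed.

(** Sequential compactness of the simplex *)

Definition strictly_increasing (phi : nat -> nat) : Prop :=
  forall n, (phi n < phi (S n))%nat.

Lemma strictly_increasing_lt phi :
  strictly_increasing phi -> forall a b, (a < b)%nat -> (phi a < phi b)%nat.
Proof.
  intros Hphi a b Hab. induction b as [|b IH]; [lia|].
  specialize (Hphi b). destruct (Nat.eq_dec a b) as [->|]; [exact Hphi|].
  assert (phi a < phi b)%nat by (apply IH; lia). lia.
Qed.

Lemma strictly_increasing_ge phi : strictly_increasing phi -> forall n, (n <= phi n)%nat.
Proof. intros Hphi n. induction n as [|n IH]; [lia|]. specialize (Hphi n). lia. Qed.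

Lemma strictly_increasing_comp phi psi :
  strictly_increasing phi -> strictly_increasing psi ->
  strictly_increasing (fun n => phi (psi n)).
Proof. intros Hphi Hpsi n. apply strictly_increasing_lt; [exact Hphi | apply Hpsi]. Qed.

Lemma cv_subsequence v l psi :
  strictly_increasing psi -> Un_cv v l -> Un_cv (fun n => v (psi n)) l.
Proof.
  intros Hpsi Hv eps Heps. destruct (Hv eps Heps) as [N HN].
  exists N. intros n Hn. apply HN. pose proof (strictly_increasing_ge psi Hpsi n). lia.
Qed.

Lemma inv_succ_small eps : 0 < eps -> exists N, forall n, (N <= n)%nat -> / (INR n + 1) < eps.
Proof.
  intros Heps. destruct (archimed_cor1 eps Heps) as [N [HN HN0]].
  exists N. intros n Hn.
  assert (0 < INR N) by (apply lt_0_INR; lia).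
  assert (INR N <= INR n) by (apply le_INR; lia).
  apply Rle_lt_trans with (/ INR N); [apply Rinv_le_contravar; lra | exact HN].
Qed.

(* The n-th index of the extracted subsequence: an index beyond the previous
   one at which the sequence is within 1/(n+1) of the adherence value. *)
Fixpoint chase (g : nat -> nat -> nat) (n : nat) : nat :=
  match n with O => g O O | S m => g (S (chase g m)) (S m) end.

Lemma adherence_subsequence u l :
  ValAdh u l -> exists psi, strictly_increasing psi /\ Un_cv (fun n => u (psi n)) l.
Proof.
  intros Hl.
  assert (Hex : forall Nk : nat * nat, exists p,
            (fst Nk <= p)%nat /\ Rabs (u p - l) < / (INR (snd Nk) + 1)).
  { intros [N k].
    assert (Hk : 0 < / (INR k + 1)) by (apply Rinv_0_lt_compat; pose proof (pos_INR k); lra).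
    destruct (Hl (disc l (mkposreal _ Hk)) N) as [p [Hp Hdisc]];
      [exists (mkposreal _ Hk); intros x Hx; exact Hx|].
    exists p. split; [exact Hp | exact Hdisc]. }
  destruct (choice _ Hex) as [g Hg].
  set (psi := chase (fun N k => g (N, k))).
  assert (Hclose : forall n, Rabs (u (psi n) - l) < / (INR n + 1)).
  { intros [|n]; [exact (proj2 (Hg (0, 0)%nat)) | exact (proj2 (Hg (S (psi n), S n)))]. }
  exists psi. split.
  - intros n. exact (proj1 (Hg (S (psi n), S n))).
  - intros eps Heps. destruct (inv_succ_small eps Heps) as [N HN].
    exists N. intros n Hn. unfold R_dist.
    specialize (Hclose n). specialize (HN n Hn). lra.
Qed.

Lemma unit_interval_subsequence u :
  (forall n, 0 <= u n <= 1) ->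
  exists psi, strictly_increasing psi /\ exists l, Un_cv (fun n => u (psi n)) l.
Proof.
  intros Hu. destruct (Bolzano_Weierstrass u _ (compact_P3 0 1) Hu) as [l Hl].
  destruct (adherence_subsequence u l Hl) as [psi [Hpsi Hcv]].
  exists psi. split; [exact Hpsi | exists l; exact Hcv].
Qed.

Lemma unit_cube_subsequence (Q : nat -> nat -> R) K :
  (forall n j, (j < K)%nat -> 0 <= Q n j <= 1) ->
  exists phi, strictly_increasing phi /\
    exists p, forall j, (j < K)%nat -> Un_cv (fun n => Q (phi n) j) (p j).
Proof.
  induction K as [|K IH]; intros HQ.
  - exists (fun n => n). split; [intros n; lia|]. exists (fun _ => 0). intros; lia.
  - destruct IH as [phi [Hphi [p Hp]]]; [intros; apply HQ; lia|].
    destruct (unit_interval_subsequence (fun n => Q (phi n) K)) as [psi [Hpsi [l Hl]]];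
      [intros; apply HQ; lia|].
    exists (fun n => phi (psi n)). split; [apply strictly_increasing_comp; assumption|].
    exists (fun j => if (j =? K)%nat then l else p j). intros j Hj.
    destruct (Nat.eqb_spec j K) as [->|Hne]; [exact Hl|].
    apply (cv_subsequence (fun n => Q (phi n) j)); [exact Hpsi | apply Hp; lia].
Qed.

Lemma feasible_limit h (Q : nat -> nat -> R) p :
  (forall n, feasible h (Q n)) ->
  (forall j, (j < h)%nat -> Un_cv (fun n => Q n j) (p j)) -> feasible h p.
Proof.
  intros HQ Hcv. split.
  - intros j Hj. apply (Rle_cv_lim (Un := fun _ => 0) (Vn := fun n => Q n j)); [|apply cv_const | apply Hcv, Hj].
    intros n. apply (proj1 (HQ n)), Hj.
  - apply (UL_sequence (fun n => rsum (Q n) h)); [apply rsum_cv, Hcv|].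
    apply (Un_cv_ext (fun _ => 1)); [intros n; symmetry; apply (HQ n) | apply cv_const].
Qed.

(** Attainment of the supremum *)

Section Attainment.
Variables (h : nat) (F : (nat -> R) -> R).
Hypothesis F_bounded : exists B, forall q, feasible h q -> F q <= B.
Hypothesis simplex_nonempty : exists u, feasible h u.

Lemma maximizing_sequence :
  exists M (Q : nat -> nat -> R),
    (forall q, feasible h q -> F q <= M) /\
    forall n, feasible h (Q n) /\ M - / (INR n + 1) < F (Q n).
Proof.
  set (values := fun x => exists q, feasible h q /\ x = F q).
  destruct (completeness values) as [M [Hub Hleast]].
  { destruct F_bounded as [B HB]. exists B. intros x [q [Hq ->]]. apply HB, Hq. }
  { destruct simplex_nonempty as [u Hu]. exists (F u), u. split; [exact Hu | reflexivity]. }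
  assert (Hnear : forall n : nat, exists q, feasible h q /\ M - / (INR n + 1) < F q).
  { intros n. apply NNPP. intros Hnone.
    assert (0 < / (INR n + 1)) by (apply Rinv_0_lt_compat; pose proof (pos_INR n); lra).
    assert (M <= M - / (INR n + 1)); [|lra].
    apply Hleast. intros x [q [Hq ->]]. apply Rnot_lt_le. intros Hlt.
    apply Hnone. exists q. split; assumption. }
  destruct (choice _ Hnear) as [Q HQ].
  exists M, Q. split; [|exact HQ].
  intros q Hq. apply Hub. exists q. split; [exact Hq | reflexivity].
Qed.

Lemma maximum_attained :
  (forall (Q : nat -> nat -> R) p,
     (forall j, (j < h)%nat -> Un_cv (fun n => Q n j) (p j)) ->
     Un_cv (fun n => F (Q n)) (F p)) ->
  exists p, feasible h p /\ forall q, feasible h q -> F q <= F p.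
Proof.
  intros F_cont.
  destruct maximizing_sequence as [M [Q [HM HQ]]].
  destruct (unit_cube_subsequence Q h) as [phi [Hphi [p Hp]]].
  { intros n j Hj. apply (feasible_coord_le1 h); [apply HQ | exact Hj]. }
  assert (Hpf : feasible h p)
    by (apply (feasible_limit h (fun n => Q (phi n))); [intros; apply HQ | exact Hp]).
  exists p. split; [exact Hpf|].
  assert (HFp : M <= F p).
  { apply (Rle_cv_lim (Un := fun n => M - / (INR (phi n) + 1)) (Vn := fun n => F (Q (phi n)))).
    - intros n. apply Rlt_le, HQ.
    - intros eps Heps. destruct (inv_succ_small eps Heps) as [N HN].
      exists N. intros n Hn. unfold R_dist.
      assert (0 < / (INR (phi n) + 1))
        by (apply Rinv_0_lt_compat; pose proof (pos_INR (phi n)); lra).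
      assert (/ (INR (phi n) + 1) < eps)
        by (apply HN; pose proof (strictly_increasing_ge phi Hphi n); lia).
      rewrite Rabs_left; lra.
    - apply (F_cont (fun n => Q (phi n))), Hp. }
  intros q Hq. pose proof (HM q Hq). lra.
Qed.

End Attainment.

(** Boundedness and positivity of the likelihood *)

Section LikelihoodBounds.
Variables (h : nat) (t : nat -> R) (W : R -> R) (xi zeta : nat -> nat).
Hypothesis hWpos : forall j, (j < h)%nat -> 0 < W (t j).

(* The likelihood is bounded on the simplex: p_j <= 1 and each tail sum is at
   most sum_k 1/W(t_k). *)
Lemma lik_bounded : exists B, forall q, feasible h q -> lik h t W xi zeta q <= B.
Proof.
  set (T := rsum (fun k => / W (t k)) h).
  exists (rprod (fun j => T ^ zeta j) h). intros q Hq. apply rprod_le. intros j Hj.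
  assert (Hqj : forall k, (k < h)%nat -> 0 <= q k <= 1)
    by (intros k Hk; apply (feasible_coord_le1 h); assumption).
  assert (0 <= tailsum h t W q j) by (apply tailsum_nonneg; [exact hWpos | apply Hq]).
  assert (tailsum h t W q j <= T).
  { apply rsum_le. intros k Hk.
    assert (0 < / W (t k)) by (apply Rinv_0_lt_compat, hWpos, Hk).
    destruct (j <=? k)%nat; [|lra].
    specialize (Hqj k Hk). unfold Rdiv. nra. }
  assert (0 <= q j ^ xi j <= 1).
  { specialize (Hqj j Hj). split; [apply pow_le; lra|].
    rewrite <- (pow1 (xi j)). apply pow_incr. exact Hqj. }
  assert (0 <= tailsum h t W q j ^ zeta j <= T ^ zeta j)
    by (split; [apply pow_le | apply pow_incr]; lra).
  split; [apply Rmult_le_pos|]; nra.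
Qed.

Lemma lik_uniform_pos :
  (1 <= h)%nat -> feasible h (fun _ => / INR h) /\ 0 < lik h t W xi zeta (fun _ => / INR h).
Proof.
  intros Hh.
  assert (Hinv : 0 < / INR h) by (apply Rinv_0_lt_compat, lt_0_INR; lia).
  split.
  - split; [intros; lra|]. rewrite rsum_const. field. apply not_0_INR. lia.
  - apply rprod_pos. intros j Hj.
    assert (0 < / INR h / W (t j)) by (apply Rdiv_lt_0_compat; [exact Hinv | apply hWpos, Hj]).
    pose proof (tailsum_ge_head h t W hWpos (fun _ => / INR h) j
                  (fun _ _ => Rlt_le _ _ Hinv) Hj).
    apply Rmult_lt_0_compat; apply pow_lt; lra.
Qed.

End LikelihoodBounds.

Theorem mainTheorem1 (h : nat) (t : nat -> R) (W : R -> R) (xi zeta : nat -> nat)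
  (hh : (1 <= h)%nat)
  (ht0 : 0 < t 0%nat)
  (htinc : forall j, (S j < h)%nat -> t j < t (S j))
  (hWmono : forall x y, 0 < x -> x <= y -> W x <= W y)
  (hWpos : forall j, (j < h)%nat -> 0 < W (t j))
  (hobs : forall j, (j < h)%nat -> (1 <= xi j + zeta j)%nat) :
  exists p : nat -> R,
    feasible h p /\
    (forall q, feasible h q -> lik h t W xi zeta q <= lik h t W xi zeta p) /\
    (forall q, feasible h q ->
       (forall r, feasible h r -> lik h t W xi zeta r <= lik h t W xi zeta q) ->
       forall j, (j < h)%nat -> q j = p j).
Proof.
  destruct (lik_uniform_pos h t W xi zeta hWpos hh) as [Hu Hu_pos].
  destruct (maximum_attained h (lik h t W xi zeta))
    as [p [Hp Hpmax]];
    [apply lik_bounded, hWpos | exists (fun _ => / INR h); exact Hu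
    | intros Q p Hcv; apply lik_cv, Hcv |].
  assert (Hp_pos : 0 < lik h t W xi zeta p) by (pose proof (Hpmax _ Hu); lra).
  exists p. split; [exact Hp | split; [exact Hpmax|]].
  intros q Hq Hqmax.
  exact (lik_maximizers_agree h t W xi zeta hWpos hobs p q Hp Hq Hpmax Hqmax Hp_pos).
Qed.
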